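(* Let $n \geq 1$ and $z \geq 2$ be integers, and let $\epsilon > 0$ be a constant. Let $\mathbf{f}_1^{(0)}, \dots, \mathbf{f}_n^{(0)}$ be arbitrary probability vectors in $\mathbb{R}^z$. For $t \geq 1$ define recursively, for all $i, j \in \{1,\dots,n\}$, $$p_{i,j}^{(t)} = \frac{\alpha_i^{(t)}}{\epsilon + D\left(\mathbf{f}_i^{(t-1)}, \mathbf{f}_j^{(t-1)}\right)}, \qquad \mathbf{f}_i^{(t)} = \sum_{j=1}^n p_{i,j}^{(t)} \mathbf{f}_j^{(t-1)},$$ where $\alpha_i^{(t)} > 0$ is the normalizing constant chosen so that $\sum_{j=1}^n p_{i,j}^{(t)} = 1$, and $D(\mathbf{u}, \mathbf{v}) = \sqrt{\frac{1}{z}\sum_{k=1}^{z} (u_k - v_k)^2}$. Then for every $i, j \in \{1,\dots,n\}$, $p_{i,j}^{(t)} \to \frac{1}{n}$ as $t \to \infty$.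
   Context: The vectors $\mathbf{f}_i^{(t)}$ represent the probabilistic opinion of expert $i$ after $t$ revisions; $p_{i,j}^{(t)}$ is the weight expert $i$ assigns to expert $j$'s opinion at revision $t$. *)

From HB Require Import structures.
From mathcomp Require Import all_boot all_order all_algebra.
From mathcomp Require Import all_classical all_reals all_analysis.
Set Implicit Arguments. Unset Strict Implicit. Unset Printing Implicit Defensive.
Import Order.TTheory GRing.Theory Num.Theory.
Local Open Scope ring_scope.

Section Opinion.
Variables (R : realType) (n z : nat) (eps : R).

Definition Dist (u v : 'I_z -> R) : R :=
  Num.sqrt (z%:R^-1 * \sum_(k < z) (u k - v k) ^+ 2).

Definition prob_vec (u : 'I_z -> R) : Prop :=
  (forall k, 0 <= u k) /\ \sum_(k < z) u k = 1.

Definition weights (f : 'I_n -> 'I_z -> R) (i j : 'I_n) : R :=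
  (eps + Dist (f i) (f j))^-1 / \sum_(k < n) (eps + Dist (f i) (f k))^-1.

Definition revise (f : 'I_n -> 'I_z -> R) : 'I_n -> 'I_z -> R :=
  fun i k => \sum_(j < n) weights f i j * f j k.

Fixpoint opinion (f0 : 'I_n -> 'I_z -> R) (t : nat) : 'I_n -> 'I_z -> R :=
  match t with
  | 0 => f0
  | t'.+1 => revise (opinion f0 t')
  end.

(* p^{(t)}_{i,j} for t >= 1 (value at t = 0 is a dummy, irrelevant for limits) *)
Definition pw (f0 : 'I_n -> 'I_z -> R) (t : nat) (i j : 'I_n) : R :=
  weights (opinion f0 t.-1) i j.

End Opinion.

(* As long as all opinions lie within [r] of each other coordinatewise, every
   distance is at most [r] and hence every weight is at least
   [δ = ε / (n (ε + r))].  A revision replaces the opinions by convex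
   combinations of them, and two convex combinations whose coefficient vectors
   overlap by at least [δ^2] are closer than the original points by the factor
   [1 - δ^2] (a Dobrushin-type estimate).  Since the spread only decreases, [δ]
   can be fixed from the initial spread, so the spread, hence all distances,
   decay geometrically; the weights are then squeezed between two bounds that
   both tend to [1/n]. *)
From HB Require Import structures.
From mathcomp Require Import all_boot all_order all_algebra.
From mathcomp Require Import all_classical all_reals all_analysis.
From mathcomp Require Import lra ring.
Import Order.TTheory GRing.Theory Num.Theory.
Import numFieldNormedType.Exports.
Local Open Scope classical_set_scope.
Local Open Scope ring_scope.
Set Implicit Arguments. Unset Strict Implicit.

Section ConvexCombinations.
Variable R : numDomainType.

Lemma convex_combB_norm_le n (p q x : 'I_n -> R) (r : R) :
  (forall j, 0 <= p j) -> (forall j, 0 <= q j) ->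
  \sum_j p j = 1 -> \sum_j q j = 1 -> (forall j m, `|x j - x m| <= r) ->
  `|\sum_j p j * x j - \sum_j q j * x j| <= r * (1 - \sum_j p j * q j).
Proof.
move=> p0 q0 hp hq hx.
have -> : \sum_j p j * x j - \sum_m q m * x m =
          \sum_j \sum_m p j * q m * (x j - x m).
  transitivity (\sum_j \sum_m p j * q m * x j - \sum_j \sum_m p j * q m * x m).
    congr (_ - _).
      apply: eq_bigr => j _; rewrite -[LHS]mulr1 -hq mulr_sumr.
      by apply: eq_bigr => m _; ring.
    rewrite exchange_big /=; apply: eq_bigr => m _.
    by rewrite -[LHS]mul1r -hp mulr_suml; apply: eq_bigr => j _; ring.
  by rewrite -sumrB; apply: eq_bigr => j _; rewrite -sumrB; apply: eq_bigr => m _; ring.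
have row_le j : `|\sum_m p j * q m * (x j - x m)| <= r * p j - r * (p j * q j).
  have -> : r * p j - r * (p j * q j) = \sum_(m | m != j) r * (p j * q m).
    rewrite -[X in r * X]mulr1 -hq mulr_sumr mulr_sumr (bigD1 j) //=.
    by rewrite addrAC subrr add0r.
  rewrite (bigD1 j) //= subrr mulr0 add0r.
  apply: le_trans (ler_norm_sum _ _ _) (ler_sum _ _) => m _.
  by rewrite normrM ger0_norm ?mulr_ge0 // mulrC ler_wpM2r ?mulr_ge0.
apply: le_trans (ler_norm_sum _ _ _) _.
apply: le_trans (ler_sum _ (fun j _ => row_le j)) _.
by rewrite sumrB -!mulr_sumr hp mulrBr mulr1.
Qed.

End ConvexCombinations.

Section Distance.
Variables (R : realType) (z : nat).

Lemma Dist_ge0 (u v : 'I_z -> R) : 0 <= Dist u v.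
Proof. exact: sqrtr_ge0. Qed.

Lemma Dist_le (u v : 'I_z -> R) (r : R) : (0 < z)%N -> 0 <= r ->
  (forall k, `|u k - v k| <= r) -> Dist u v <= r.
Proof.
move=> z_gt0 r_ge0 huv.
rewrite /Dist -(ger0_norm r_ge0) -sqrtr_sqr ler_sqrt ?sqr_ge0 //.
have z_pos : 0 < z%:R :> R by rewrite ltr0n.
apply: (@le_trans _ _ (z%:R^-1 * (z%:R * r ^+ 2))).
  apply: ler_wpM2l; first by rewrite invr_ge0 ltW.
  have -> : z%:R * r ^+ 2 = \sum_(k < z) r ^+ 2.
    by rewrite sumr_const card_ord mulr_natl.
  apply: ler_sum => k _; have := huv k; rewrite ler_norml => /andP[]; nra.
by rewrite mulrA mulVf ?mul1r // gt_eqF.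
Qed.

End Distance.

Section Weights.
Variables (R : realType) (n z : nat) (eps : R).
Hypothesis eps_gt0 : 0 < eps.
Variables (f : 'I_n -> 'I_z -> R) (i : 'I_n) (r : R).
Hypothesis Dist_le_r : forall k, Dist (f i) (f k) <= r.

Let eps_add_gt0 x : 0 <= x -> 0 < eps + x.
Proof. by move/ltr_wpDr; apply. Qed.

Let r_ge0 : 0 <= r.
Proof. exact: le_trans (Dist_ge0 _ _) (Dist_le_r i). Qed.

Let n_gt0 : 0 < n%:R :> R.
Proof. by rewrite ltr0n (leq_ltn_trans _ (ltn_ord i)). Qed.

Let inv_dist_bounds k :
  (eps + r)^-1 <= (eps + Dist (f i) (f k))^-1 <= eps^-1.
Proof.
have d_ge0 := Dist_ge0 (f i) (f k).
by rewrite !lef_pV2 ?posrE ?eps_add_gt0 ?lerD2l ?lerDl ?Dist_le_r.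
Qed.

Let weights_denom_bounds :
  n%:R * (eps + r)^-1 <= \sum_k (eps + Dist (f i) (f k))^-1 <= n%:R * eps^-1.
Proof.
have sum_const (a : R) : n%:R * a = \sum_(k < n) a.
  by rewrite sumr_const card_ord mulr_natl.
rewrite !sum_const.
by apply/andP; split; apply: ler_sum => k _; case/andP: (inv_dist_bounds k).
Qed.

Let weights_denom_gt0 : 0 < \sum_k (eps + Dist (f i) (f k))^-1.
Proof.
case/andP: weights_denom_bounds => + _; apply: lt_le_trans.
by rewrite mulr_gt0 // invr_gt0 eps_add_gt0.
Qed.

Lemma weights_ge0 j : 0 <= weights eps f i j.
Proof. by rewrite divr_ge0 ?ltW // invr_gt0 eps_add_gt0 ?Dist_ge0. Qed.

Lemma weights_sum1 : \sum_j weights eps f i j = 1.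
Proof. by rewrite -mulr_suml mulfV // gt_eqF. Qed.

Lemma weights_ge j : eps / (n%:R * (eps + r)) <= weights eps f i j.
Proof.
have -> : eps / (n%:R * (eps + r)) = (eps + r)^-1 / (n%:R * eps^-1).
  by field; rewrite !gt_eqF ?eps_add_gt0.
case/andP: (inv_dist_bounds j) => inv_ge _; case/andP: weights_denom_bounds => _ denom_le.
have denom_pos : 0 < n%:R * eps^-1 by rewrite mulr_gt0 ?invr_gt0.
apply: ler_pM inv_ge _.
- by rewrite invr_ge0 ltW ?eps_add_gt0.
- by rewrite invr_ge0 ltW.
- by rewrite lef_pV2 ?posrE.
Qed.
Lemma weights_le j : weights eps f i j <= (eps + r) / (n%:R * eps).
Proof.
have -> : (eps + r) / (n%:R * eps) = eps^-1 / (n%:R * (eps + r)^-1).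
  by field; rewrite !gt_eqF ?eps_add_gt0.
case/andP: (inv_dist_bounds j) => _ inv_le; case/andP: weights_denom_bounds => denom_ge _.
have denom_pos : 0 < n%:R * (eps + r)^-1 by rewrite mulr_gt0 ?invr_gt0 ?eps_add_gt0.
apply: ler_pM inv_le _.
- by rewrite invr_ge0 ltW ?eps_add_gt0 ?Dist_ge0.
- by rewrite invr_ge0 ltW.
- by rewrite lef_pV2 ?posrE.
Qed.

End Weights.

Section Dynamics.
Variables (R : realType) (n z : nat) (eps : R).
Hypotheses (eps_gt0 : 0 < eps) (n_gt0 : (0 < n)%N) (z_gt0 : (0 < z)%N).

Definition spread_le (f : 'I_n -> 'I_z -> R) (r : R) :=
  forall i l k, `|f i k - f l k| <= r.

Lemma spread_le_sum (f : 'I_n -> 'I_z -> R) :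
  spread_le f (\sum_i \sum_l \sum_k `|f i k - f l k|).
Proof.
move=> i l k.
have sum_ge (I : finType) (G : I -> R) a : (forall b, 0 <= G b) -> G a <= \sum_b G b.
  by move=> G_ge0; rewrite (bigD1 a) //= lerDl sumr_ge0.
apply: le_trans (sum_ge _ _ i _) => [|a]; last by do 2 (apply: sumr_ge0 => ? _).
apply: le_trans (sum_ge _ _ l _) => [|b]; last by apply: sumr_ge0.
exact: sum_ge.
Qed.

Lemma spread_le_ge0 f r : spread_le f r -> 0 <= r.
Proof. by move/(_ (Ordinal n_gt0) (Ordinal n_gt0) (Ordinal z_gt0)); apply: le_trans. Qed.

Lemma Dist_le_spread f r i l : spread_le f r -> Dist (f i) (f l) <= r.
Proof. by move=> hf; apply: Dist_le => //; apply: spread_le_ge0 hf. Qed.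

Definition contraction_rate (W : R) := 1 - (eps / (n%:R * (eps + W))) ^+ 2.

Lemma contraction_rate_ge0 (W : R) : 0 <= W -> 0 <= contraction_rate W.
Proof.
move=> W_ge0; have n_ge1 : 1 <= n%:R :> R by rewrite ler1n.
have e_gt0 := eps_gt0.
have weight_le1 : eps / (n%:R * (eps + W)) <= 1.
  by rewrite ler_pdivrMr ?mul1r ?mulr_gt0 //; nra.
rewrite subr_ge0 expr2 -[1]mulr1 ler_pM ?divr_ge0 ?mulr_ge0 //; lra.
Qed.

Lemma contraction_rate_lt1 (W : R) : 0 <= W -> contraction_rate W < 1.
Proof.
move=> W_ge0; have e_gt0 := eps_gt0.
rewrite /contraction_rate ltrBlDr ltrDl exprn_gt0 //.
by rewrite divr_gt0 ?mulr_gt0 ?ltr0n //; lra.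
Qed.

Lemma revise_spread f r W : r <= W -> spread_le f r ->
  spread_le (revise eps f) (r * contraction_rate W).
Proof.
move=> r_le_W hf i l k; rewrite /revise.
have Dist_le_W a b : Dist (f a) (f b) <= W := le_trans (Dist_le_spread _ _ hf) r_le_W.
apply: le_trans (convex_combB_norm_le _ _ _ _ (fun a b => hf a b k)) _.
- exact: weights_ge0.
- exact: weights_ge0.
- exact: weights_sum1 (Dist_le_W i).
- exact: weights_sum1 (Dist_le_W l).
apply: ler_wpM2l; first exact: spread_le_ge0 hf.
rewrite lerD2l lerN2 expr2.
apply: le_trans (_ : weights eps f i i * weights eps f l i <= _).
  have W_ge0 : 0 <= W := le_trans (spread_le_ge0 hf) r_le_W.
  have del_ge0 : 0 <= eps / (n%:R * (eps + W)).
    by rewrite divr_ge0 ?mulr_ge0 ?addr_ge0 ?ler0n // ltW.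
  exact: (ler_pM del_ge0 del_ge0
    (weights_ge eps_gt0 (Dist_le_W i) i) (weights_ge eps_gt0 (Dist_le_W l) i)).
rewrite (bigD1 i) //= lerDl sumr_ge0 // => j _.
by rewrite mulr_ge0 // (weights_ge0 eps_gt0 (Dist_le_W _)).
Qed.

Lemma opinion_spread f0 W t : spread_le f0 W ->
  spread_le (opinion eps f0 t) (contraction_rate W ^+ t * W).
Proof.
move=> hf0; have W_ge0 := spread_le_ge0 hf0.
have [c_ge0 c_le1] := (contraction_rate_ge0 W_ge0, ltW (contraction_rate_lt1 W_ge0)).
elim: t => [|t IHt]; first by rewrite expr0 mul1r.
rewrite exprSr mulrAC; apply: revise_spread IHt.
by rewrite ler_piMl ?exprn_ile1.
Qed.

Lemma weights_cvg (g : nat -> 'I_n -> 'I_z -> R) (s : R^nat) i j :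
  s @ \oo --> 0 -> (forall t k, Dist (g t i) (g t k) <= s t) ->
  (fun t => weights eps (g t) i j) @ \oo --> (n%:R^-1 : R).
Proof.
move=> s_cvg0 Dist_le_s.
have n_pos : 0 < n%:R :> R by rewrite ltr0n.
apply: (@squeeze_cvgr _ _ _ _ (fun t => eps / (n%:R * (eps + s t)))
         (fun t => (eps + s t) / (n%:R * eps))).
- apply: nearW => t.
  by rewrite (weights_ge eps_gt0 (Dist_le_s t)) (weights_le eps_gt0 (Dist_le_s t)).
- have -> : n%:R^-1 = eps / (n%:R * (eps + 0)) :> R.
    by rewrite addr0; field; rewrite !gt_eqF.
  apply: cvgM; first exact: cvg_cst.
  apply: cvgV; first by rewrite addr0 mulf_neq0 // gt_eqF.
  by apply: cvgM; [exact: cvg_cst | apply: cvgD; [exact: cvg_cst | exact: s_cvg0]].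
- have -> : n%:R^-1 = (eps + 0) / (n%:R * eps) :> R.
    by rewrite addr0; field; rewrite !gt_eqF.
  by apply: cvgM; [apply: cvgD; [exact: cvg_cst | exact: s_cvg0] | exact: cvg_cst].
Qed.

End Dynamics.

(* The hypotheses [hf0] and [2 <= z] are stronger than needed: the argument
   works for arbitrary initial vectors and any [z >= 1]. *)
Theorem corollary1 (R : realType) (n z : nat) (eps : R)
  (hn : (1 <= n)%N) (hz : (2 <= z)%N) (heps : 0 < eps)
  (f0 : 'I_n -> 'I_z -> R) (hf0 : forall i, prob_vec (f0 i)) :
  forall i j : 'I_n,
    ((fun t : nat => pw eps f0 t i j) : R^nat) @ \oo --> (n%:R : R)^-1.
Proof.
move=> i j; have z_gt0 : (0 < z)%N by apply: leq_trans hz.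
have hW := spread_le_sum f0; set W := \sum_i _ in hW.
have W_ge0 := spread_le_ge0 hn z_gt0 hW.
set c := contraction_rate n eps W.
have geometric_cvg0 : (fun t => c ^+ t * W) @ \oo --> 0.
  rewrite -(mul0r W); apply: cvgM; last exact: cvg_cst.
  apply: cvg_expr; rewrite ger0_norm ?(contraction_rate_lt1 heps hn W_ge0) //.
  exact: (contraction_rate_ge0 heps hn W_ge0).
rewrite -cvg_shiftS /=.
apply: (weights_cvg heps hn _ geometric_cvg0) => t k.
exact: (Dist_le_spread hn z_gt0 _ _ (opinion_spread heps hn z_gt0 t hW)).
Qed.
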